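(* Consider the following online reputation model. A random state $x\in\mathbb X=\{1,\dots,X\}$ has prior $\pi_0$ with $\pi_0(i)>0$ for all $i$. Nodes $n=1,2,\dots$ (node $n$ represents agent $s$ at time $k$ via $n=s+S(k-1)$, $s\in\{1,\dots,S\}$) act in increasing order of $n$. Information flow is given by a directed acyclic graph on $\{1,2,\dots\}$ whose edges $(m,n)$ all satisfy $m<n$; $A_n$ is its $n\times n$ adjacency matrix restricted to nodes $1,\dots,n$, with $A_n(m,n')=1$ iff there is an edge from $m$ to $n'$ (so $A_n$ is strictly upper triangular), and $T_n=\operatorname{sgn}((I_n-A_n)^{-1})$ is its transitive closure matrix ($\operatorname{sgn}$ applied entrywise: $0\mapsto0$, nonzero $\mapsto1$). Let $\mathcal F_n=\{m<n: T_n(m,n)=1\}$ (nodes with a directed path to $n$). Private observations $y_1,y_2,\dots\in\mathbb Y=\{1,\dots,Y\}$ are conditionally i.i.d. given $x$ with $P(y_n=y\mid x=i)=B_{iy}>0$. Node $n$ proceeds as follows: it is given a prior (recommendation) belief $\pi_{n-}$; it computes $\eta_n=B_{y_n}\pi_{n-}/(\mathbf 1_X'B_{y_n}\pi_{n-})$ with $B_y=\operatorname{diag}(B_{1y},\dots,B_{Xy})$; it takes the action $a_n=a(\pi_{n-},y_n):=\arg\min_{a\in\mathcal A}c_a'\eta_n$ (fixed deterministic tie-breaking, given cost vectors $c_a$, $\mathcal A=\{1,\dots,A\}$); and the administrator computes the public belief $\pi_n(i)\propto P(a_n\mid x=i,\pi_{n-})\,\pi_{n-}(i)$, where $P(a\mid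 x=i,\pi)=\sum_{y}\mathbf 1\{a(\pi,y)=a\}B_{iy}$. Define $l_m(i)=\log\pi_m(i)-\log\pi_0(i)$. Suppose that for every $n$ the recommendation belief is computed by $$\log\pi_{n-}(i)=\log\pi_0(i)+\sum_{m=1}^{n-1}w_n(m)\,l_m(i)+\text{const}_n,\qquad w_n=T_{n-1}^{-1}t_n,$$ where $\text{const}_n$ does not depend on $i$ (it is fixed by normalization), $T_{n-1}$ is the upper-left $(n-1)\times(n-1)$ block of $T_n$ and $t_n\in\{0,1\}^{n-1}$ consists of the first $n-1$ entries of the $n$-th column of $T_n$ (for $n=1$ the sum is empty and $\pi_{1-}=\pi_0$). Then for every $n$ and $i\in\mathbb X$, $$\pi_{n-}(i)=\pi^0_{n-}(i):=P\big(x=i\mid \{a_m: m\in\mathcal F_n\}\big),$$ i.e. the recommendation equals the fair (incest-free) rating; consequently $\eta_n(i)=P(x=i\mid\{a_m:m\in\mathcal F_n\},y_n)$ and $\pi_n(i)=P(x=i\mid\{a_m:m\in\mathcal F_n\},a_n)$.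
   Context: Here $\pi^0_{n-}$ is called the fair online rating available to node $n$: it is the posterior of $x$ given exactly the actions of all nodes whose information eventually reaches node $n$ through the graph. $T_n$ has ones on the diagonal and $T_{n-1}$ is unit upper triangular, hence invertible. $\mathbf 1_X$ is the all-ones vector. *)

From HB Require Import structures.
From mathcomp Require Import all_boot all_algebra.
From Stdlib Require Import Reals.

Set Implicit Arguments.
Unset Strict Implicit.
Unset Printing Implicit Defensive.

Definition intZ (z : int) : Z :=
  match z with
  | Posz n => Z.of_nat n
  | Negz n => (- Z.of_nat n.+1)%Z
  end.

Definition ratR (q : rat) : R :=
  Rdiv (IZR (intZ (numq q))) (IZR (intZ (denq q))).

Local Open Scope ring_scope.
(* A_n : adjacency matrix on nodes 1..n (index i : 'I_n is node i+1). *)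
Definition Amat (edge : nat -> nat -> bool) (n : nat) : 'M[rat]_n :=
  \matrix_(i < n, j < n) (if edge i.+1 j.+1 then 1 else 0).

Definition Tmat (edge : nat -> nat -> bool) (n : nat) : 'M[rat]_n :=
  \matrix_(i < n, j < n)
    (if invmx (1%:M - Amat edge n) i j == 0 then 0 else 1).

(* For node n = k+1: T_{n-1} is the upper-left k x k block of T_n, t_n the
   first k entries of the last column of T_n, and w_n = T_{n-1}^{-1} t_n. *)
Definition Tblock (edge : nat -> nat -> bool) (k : nat) : 'M[rat]_k :=
  \matrix_(i < k, j < k)
    Tmat edge k.+1 (widen_ord (leqnSn k) i) (widen_ord (leqnSn k) j).

Definition tcol (edge : nat -> nat -> bool) (k : nat) : 'cV[rat]_k :=
  \col_(i < k) Tmat edge k.+1 (widen_ord (leqnSn k) i) ord_max.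

Definition wvec (edge : nat -> nat -> bool) (k : nat) : 'cV[rat]_k :=
  invmx (Tblock edge k) *m tcol edge k.

(* F_n for n = k+1: node j+1 (j : 'I_k) is in F_n iff T_n(j+1, n) = 1. *)
Definition inF (edge : nat -> nat -> bool) (k : nat) (j : 'I_k) : bool :=
  Tmat edge k.+1 (widen_ord (leqnSn k) j) ord_max == 1.
Local Close Scope ring_scope.

Open Scope R_scope.
Definition sumX (X : nat) (F : 'I_X -> R) : R := \big[Rplus/0]_(i < X) F i.

Definition etaOf (X Y : nat) (B : 'I_X -> 'I_Y -> R) (pi : 'I_X -> R)
    (y : 'I_Y) : 'I_X -> R :=
  fun i => Rdiv (B i y * pi i) (sumX (fun j => B j y * pi j)).

Definition Pact (X Y A : nat) (B : 'I_X -> 'I_Y -> R)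
    (sel : ('I_X -> R) -> 'I_A) (pi : 'I_X -> R) (a : 'I_A) (i : 'I_X) : R :=
  \big[Rplus/0]_(y < Y) (if sel (etaOf B pi y) == a then B i y else 0).

Definition pubUpdate (X Y A : nat) (B : 'I_X -> 'I_Y -> R)
    (sel : ('I_X -> R) -> 'I_A) (pi : 'I_X -> R) (a : 'I_A) : 'I_X -> R :=
  fun i => Rdiv (Pact B sel pi a i * pi i)
                (sumX (fun j => Pact B sel pi a j * pi j)).

(* Outcomes: the state x and observations of nodes 1..k+1 (f j = y_{j+1}).
   ext ys0 f : the full observation sequence that agrees with f on nodes
   1..k+1 and with ys0 elsewhere (irrelevant for actions of nodes <= k+1). *)
Definition ext (Y k : nat) (ys0 : nat -> 'I_Y) (f : {ffun 'I_k.+1 -> 'I_Y})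
    : nat -> 'I_Y :=
  fun m => if m is m'.+1 then oapp (fun j : 'I_k.+1 => f j) (ys0 m) (insub m')
           else ys0 m.

Definition jointP (X Y k : nat) (pi0 : 'I_X -> R) (B : 'I_X -> 'I_Y -> R)
    (i : 'I_X) (f : {ffun 'I_k.+1 -> 'I_Y}) : R :=
  pi0 i * \big[Rmult/1]_(j < k.+1) B i (f j).

Definition condP (X Y k : nat) (pi0 : 'I_X -> R) (B : 'I_X -> 'I_Y -> R)
    (ev : {ffun 'I_k.+1 -> 'I_Y} -> bool) (i : 'I_X) : R :=
  Rdiv (\big[Rplus/0]_(f : {ffun 'I_k.+1 -> 'I_Y} | ev f) jointP pi0 B i f)
       (sumX (fun j => \big[Rplus/0]_(f : {ffun 'I_k.+1 -> 'I_Y} | ev f)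
                          jointP pi0 B j f)).

(* 1. T_n is the reachability matrix: since A_n is strictly upper triangular,
      (I - A_n)^-1 = I + A_n (I - A_n)^-1 has nonnegative entries, nonzero
      exactly at reachable pairs.  Hence T_{n-1} w_n = t_n says that, weighted
      by w_n, the ancestor sets of the earlier nodes cover every ancestor of n
      exactly once (weighted_ancestor_sums).
   2. By strong induction on n, log pi_{n-} is, up to a state-independent
      constant, log pi_0 plus the log-likelihoods of the ancestors' actions
      (recommendation_loglik); consequently the recommendation depends only on
      those actions (recommendation_ancestors).
   3. On the event that all ancestors act as observed, each ancestor receives
      its observed recommendation, so the event is a product of conditions on
      the individual observations (fair_product); its mass is pi_0 times the
      product of the action likelihoods (fair_event_mass), which is the
      normalized recommendation (recommendation_fair_weight).
   4. Bayes' rule then identifies eta_n and pi_n with the posteriors given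
      the additional observation, respectively action, of node n. *)

From HB Require Import structures.
From mathcomp Require Import all_boot all_algebra.
From Stdlib Require Import Reals ClassicalEpsilon FunctionalExtensionality.
Import mathcomp.order.order.Order.TTheory GRing.Theory Num.Theory.
From mathcomp Require Import Rstruct zify ring lra.
Set Implicit Arguments.
Unset Strict Implicit.
Unset Printing Implicit Defensive.
Local Open Scope ring_scope.

(* A square matrix that is upper triangular with ones on the diagonal is
   invertible; both I - A_n and T_{n-1} are of this form. *)
Lemma unitriangular_unitmx (F : comUnitRingType) n (M : 'M[F]_n) :
  (forall i j : 'I_n, (j < i)%nat -> M i j = 0) -> (forall i, M i i = 1) ->
  M \in unitmx.
Proof.
move=> upper diag1; rewrite unitmxE -det_tr det_trig.
  by rewrite big1 ?unitr1 // => i _; rewrite mxE diag1.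
by apply/is_trig_mxP => i j lt_ij; rewrite mxE upper.
Qed.

Lemma ord_down_ind n (P : 'I_n -> Prop) :
  (forall i : 'I_n, (forall l : 'I_n, (i < l)%nat -> P l) -> P i) -> forall i, P i.
Proof.
move=> IH i; have [m] := ubnP (n - i); elim: m i => // m IHm i lt_i.
apply: IH => l lt_il; apply: IHm; have := ltn_ord l; lia.
Qed.

Section TransitiveClosure.
Variable edge : nat -> nat -> bool.
Hypothesis edge_forward : forall m n, edge m n -> (0 < m < n)%nat.

(* reach i j : there is a directed path from node i+1 to node j+1
   (0-based indices, as in the matrices A_n and T_n). *)
Inductive reach : nat -> nat -> Prop :=
| reach_refl i : reach i i
| reach_step i j l : edge i.+1 j.+1 -> reach j l -> reach i l.

Lemma edge_lt i j : edge i.+1 j.+1 -> (i < j)%nat.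
Proof. by move/edge_forward/andP=> []. Qed.

Lemma reach_le i j : reach i j -> (i <= j)%nat.
Proof. by elim=> // a b c /edge_lt /ltnW le_ab _; apply: leq_trans le_ab. Qed.

Lemma reach_inv i l : reach i l -> i = l \/ exists2 j, edge i.+1 j.+1 & reach j l.
Proof. by case=> [a|a j b e r]; [left | right; exists j]. Qed.

Lemma reach_trans i j l : reach i j -> reach j l -> reach i l.
Proof. by elim=> // a b c e _ IH /IH; apply: reach_step. Qed.

Definition reachb (i j : nat) : bool :=
  if excluded_middle_informative (reach i j) then true else false.

Lemma reachbP i j : reflect (reach i j) (reachb i j).
Proof. by rewrite /reachb; case: excluded_middle_informative; constructor. Qed.

Lemma reachb_refl i : reachb i i.
Proof. exact/reachbP/reach_refl. Qed.

Lemma reachb_le i j : reachb i j -> (i <= j)%nat.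
Proof. by move/reachbP/reach_le. Qed.

Lemma reachb_trans i j l : reachb i j -> reachb j l -> reachb i l.
Proof. by move=> /reachbP rij /reachbP rjl; apply/reachbP; apply: reach_trans rij rjl. Qed.

Lemma unitmx_IA n : (1%:M - Amat edge n) \in unitmx.
Proof.
apply: unitriangular_unitmx => [i j lt_ji|i]; rewrite !mxE.
  have -> : (i == j) = false by apply/eqP=> eq_ij; rewrite eq_ij ltnn in lt_ji.
  case E: edge; last by rewrite subr0.
  by move: (edge_lt E); rewrite ltnNge ltnW.
by rewrite eqxx; case E: edge => //; move: (edge_lt E); rewrite ltnn.
Qed.

Let M n := invmx (1%:M - Amat edge n).

(* M = I + A M: an entry of M sums the entries of M at the successors. *)
Lemma resolvent_rec n (i j : 'I_n) :
  M n i j = (i == j)%:R + \sum_(l < n | edge i.+1 l.+1) M n l j.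
Proof.
have /eqP : (1%:M - Amat edge n) *m M n = 1%:M by rewrite mulmxV ?unitmx_IA.
rewrite mulmxBl mul1mx subr_eq => /eqP resolvent_eq.
rewrite {1}resolvent_eq !mxE [in RHS]big_mkcond; congr (_ + _).
apply: eq_bigr => l _.
by rewrite mxE; case: edge; rewrite ?mul1r ?mul0r.
Qed.

Lemma resolvent_ge0 n (i j : 'I_n) : 0 <= M n i j.
Proof.
elim/ord_down_ind: i => i IH; rewrite resolvent_rec addr_ge0 ?ler0n //.
by apply: sumr_ge0 => l /edge_lt; apply: IH.
Qed.

Lemma resolvent_neq0 n (i j : 'I_n) : M n i j != 0 <-> reach i j.
Proof.
elim/ord_down_ind: i => i IH.
rewrite resolvent_rec paddr_eq0 ?ler0n ?sumr_ge0 // => [|l _]; last first.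
  exact: resolvent_ge0.
rewrite negb_and pnatr_eq0 eqb0 negbK psumr_neq0 => [|l _]; last first.
  exact: resolvent_ge0.
split.
  case/orP=> [/eqP->|/hasP[l _ /andP[e /gt_eqF/negbT /(IH l (edge_lt e))]]].
    exact: reach_refl.
  exact: reach_step e.
move=> /reach_inv[/val_inj->|[b e r]]; first by rewrite eqxx.
have lt_bn : (b < n)%nat by apply: leq_ltn_trans (reach_le r) (ltn_ord j).
apply/orP; right; apply/hasP; exists (Ordinal lt_bn); rewrite ?mem_index_enum //=.
by rewrite e lt0r resolvent_ge0 andbT; apply/(IH (Ordinal lt_bn) (edge_lt e)).
Qed.

Lemma TmatE n (i j : 'I_n) : Tmat edge n i j = if reachb i j then 1 else 0.
Proof.
rewrite mxE; have [to_reach of_reach] := resolvent_neq0 i j.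
case: (reachbP i j) => [r | nr]; first by rewrite (negbTE (of_reach r)).
by case: eqP => // /eqP /to_reach.
Qed.

Lemma TblockE k (i j : 'I_k) : Tblock edge k i j = if reachb i j then 1 else 0.
Proof. by rewrite mxE TmatE. Qed.

Lemma tcolE k (i : 'I_k) : tcol edge k i ord0 = if reachb i k then 1 else 0.
Proof. by rewrite mxE TmatE. Qed.

Lemma inFE k (j : 'I_k) : inF edge j = reachb j k.
Proof. by rewrite /inF TmatE; case: reachb; rewrite ?eqxx. Qed.

Lemma weights_solve k (i : 'I_k) :
  \sum_(m < k) (if reachb i m then 1 else 0) * wvec edge k m ord0 =
  if reachb i k then 1 else 0.
Proof.
have unit_T : Tblock edge k \in unitmx.
  apply: unitriangular_unitmx => [a b lt_ba|a]; rewrite TblockE ?reachb_refl //.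
  by case: ifP => // /reachb_le; rewrite leqNgt lt_ba.
have : Tblock edge k *m wvec edge k = tcol edge k.
  by rewrite /wvec mulmxA mulmxV // mul1mx.
move/(congr1 (fun v : 'cV[rat]_k => v i ord0)); rewrite tcolE mxE => <-.
by apply: eq_bigr => m _; rewrite TblockE.
Qed.

End TransitiveClosure.

(* Summing, with the weights w_n, the sums of a quantity u over the ancestors
   of each earlier node counts u exactly once on every ancestor of n: this is
   how the weights remove the double counting ("data incest"). *)
Lemma weighted_ancestor_sums (edge : nat -> nat -> bool)
    (edge_forward : forall m n, edge m n -> (0 < m < n)%nat)
    (K : numFieldType) (k : nat) (u : nat -> K) :
  \sum_(j < k) ratr (wvec edge k j ord0) * \sum_(m < k | reachb edge m j) u m
  = \sum_(m < k | reachb edge m k) u m.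
Proof.
under eq_bigr => j _ do rewrite big_mkcond mulr_sumr.
rewrite exchange_big [RHS]big_mkcond; apply: eq_bigr => m _ /=.
have -> : \sum_(j < k) ratr (wvec edge k j ord0) * (if reachb edge m j then u m else 0)
    = u m * ratr (\sum_(j < k) (if reachb edge m j then 1 else 0) * wvec edge k j ord0).
  rewrite rmorph_sum mulr_sumr; apply: eq_bigr => j _.
  by case: reachb; rewrite ?rmorphM ?rmorph1 ?rmorph0 ?mul1r ?mul0r ?mulr0 // mulrC.
by rewrite weights_solve //; case: reachb; rewrite ?rmorph1 ?rmorph0 ?mulr1 ?mulr0.
Qed.

Lemma sum_prod_event (K : comNzRingType) (T : finType) n
    (Q : 'I_n -> T -> bool) (F : 'I_n -> T -> K) :
  \sum_(f : {ffun 'I_n -> T} | [forall j, Q j (f j)]) \prod_j F j (f j)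
  = \prod_j \sum_(y | Q j y) F j y.
Proof.
under [RHS]eq_bigr => j _ do rewrite big_mkcond.
rewrite bigA_distr_bigA [LHS]big_mkcond; apply: eq_bigr => f _.
case: (boolP [forall j, Q j (f j)]) => [/forallP Qf|/forallPn [j nQj]].
  by apply: eq_bigr => j _; rewrite Qf.
by rewrite (bigD1 j) //= (negbTE nQj) mul0r.
Qed.

Lemma lnM (x y : R) : 0 < x -> 0 < y -> ln (x * y) = ln x + ln y.
Proof. by move=> /RltP x_gt0 /RltP y_gt0; apply: ln_mult. Qed.

Lemma lnD (x y : R) : 0 < x -> 0 < y -> ln (x / y) = ln x - ln y.
Proof.
move=> x_gt0 y_gt0; rewrite lnM ?invr_gt0 //; congr (_ + _).
by apply: ln_Rinv; apply/RltP.
Qed.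

Lemma ln_prod (I : finType) (P : pred I) (F : I -> R) :
  (forall j, P j -> 0 < F j) -> ln (\prod_(j | P j) F j) = \sum_(j | P j) ln (F j).
Proof.
move=> F_gt0.
suff : 0 < \prod_(j | P j) F j /\ ln (\prod_(j | P j) F j) = \sum_(j | P j) ln (F j).
  by case.
apply: (big_rec2 (fun a b => 0 < a /\ ln a = b)); first by split; [exact: ltr01 | exact: ln_1].
by move=> j a b Pj [a_gt0 <-]; rewrite mulr_gt0 ?lnM ?F_gt0.
Qed.

Lemma sumr_gt0_pos n (F : 'I_n -> R) (i : 'I_n) :
  (forall j, 0 < F j) -> 0 < \sum_j F j.
Proof.
move=> F_gt0; rewrite (bigD1 i) //= ltr_pwDl ?F_gt0 //.
by apply: sumr_ge0 => j _; apply: ltW.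
Qed.

Lemma log_ratio_const_eq n (p q : 'I_n -> R) :
  (forall i, 0 < p i) -> (forall i, 0 < q i) -> \sum_i p i = 1 -> \sum_i q i = 1 ->
  (forall i i', ln (p i) - ln (q i) = ln (p i') - ln (q i')) -> forall i, p i = q i.
Proof.
move=> p_gt0 q_gt0 p_sum1 q_sum1 const i.
have p_eq j : p j = q j * (p i / q i).
  have ratio_gt0 : 0 < q j * (p i / q i) by rewrite mulr_gt0 ?divr_gt0.
  apply: ln_inv; [exact/RltP | exact/RltP | ].
  by rewrite lnM ?divr_gt0 // lnD //; have := const i j; lra.
have ratio_eq1 : p i / q i = 1.
  by rewrite -p_sum1 (eq_bigr _ (fun j _ => p_eq j)) -mulr_suml q_sum1 mul1r.
by rewrite p_eq ratio_eq1 mulr1.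
Qed.

Lemma bayes_rescale n (a b : 'I_n -> R) (Z : R) i : Z != 0 ->
  a i * (b i / Z) / \sum_j a j * (b j / Z) = b i * a i / \sum_j b j * a j.
Proof.
move=> Z_neq0.
have -> : \sum_j a j * (b j / Z) = (\sum_j b j * a j) / Z.
  by rewrite mulr_suml; apply: eq_bigr => j _; field.
have [->|S_neq0] := eqVneq (\sum_j b j * a j) 0; first by rewrite mul0r !invr0 !mulr0.
by field; apply/andP.
Qed.

Lemma condP_normalize (X Y k : nat) (pi0 : 'I_X -> R) (B : 'I_X -> 'I_Y -> R)
    (ev : {ffun 'I_k.+1 -> 'I_Y} -> bool) (N : 'I_X -> R) :
  (forall j, \sum_(f | ev f) jointP pi0 B j f = N j) ->
  forall i, condP pi0 B ev i = N i / \sum_j N j.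
Proof.
move=> mass i; rewrite /condP RdivE /sumX; congr (_ / _); first exact: mass.
by apply: eq_bigr => j _; apply: mass.
Qed.

Lemma extE (Y k : nat) (ys0 : nat -> 'I_Y) (f : {ffun 'I_k.+1 -> 'I_Y}) (j : 'I_k.+1) :
  ext ys0 f j.+1 = f j.
Proof. by rewrite /ext valK. Qed.

Section Reputation.
Variables (X Y A : nat) (pi0 : 'I_X -> R) (B : 'I_X -> 'I_Y -> R)
  (edge : nat -> nat -> bool) (sel : ('I_X -> R) -> 'I_A)
  (pim pi : (nat -> 'I_Y) -> nat -> 'I_X -> R) (act : (nat -> 'I_Y) -> nat -> 'I_A).
Hypothesis pi0_gt0 : forall i, 0 < pi0 i.
Hypothesis B_gt0 : forall i y, 0 < B i y.
Hypothesis B_sum1 : forall i, \sum_(y < Y) B i y = 1.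
Hypothesis edge_forward : forall m n, edge m n -> (0 < m < n)%nat.
Hypothesis pim_gt0 : forall ys k i, 0 < pim ys k.+1 i.
Hypothesis pim_sum1 : forall ys k, \sum_(i < X) pim ys k.+1 i = 1.
Hypothesis pim_log : forall ys k, exists cst : R, forall i,
  ln (pim ys k.+1 i) = ln (pi0 i)
     + \sum_(j < k) ratr (wvec edge k j ord0) * (ln (pi ys j.+1 i) - ln (pi0 i)) + cst.
Hypothesis act_def : forall ys k, act ys k.+1 = sel (etaOf B (pim ys k.+1) (ys k.+1)).
Hypothesis pi_def : forall ys k, pi ys k.+1 = pubUpdate B sel (pim ys k.+1) (act ys k.+1).

Definition actlik ys m i := Pact B sel (pim ys m.+1) (act ys m.+1) i.

Lemma PactE p a i : Pact B sel p a i = \sum_(y < Y | sel (etaOf B p y) == a) B i y.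
Proof. by rewrite [RHS]big_mkcond. Qed.

(* The observation actually made by node m+1 produces its action. *)
Lemma actlik_gt0 ys m i : 0 < actlik ys m i.
Proof.
rewrite /actlik PactE (bigD1 (ys m.+1)) /= -?act_def ?eqxx //.
by rewrite ltr_pwDl ?B_gt0 // sumr_ge0 // => y _; apply: ltW.
Qed.

Definition pubnorm ys m := \sum_(j < X) actlik ys m j * pim ys m.+1 j.

Lemma pubnorm_gt0 ys m (i : 'I_X) : 0 < pubnorm ys m.
Proof. by apply: (sumr_gt0_pos i) => j; rewrite mulr_gt0 ?actlik_gt0. Qed.

Lemma piE ys m i : pi ys m.+1 i = actlik ys m i * pim ys m.+1 i / pubnorm ys m.
Proof. by rewrite pi_def /pubUpdate RdivE. Qed.

Definition ancestor_loglik ys k i := \sum_(j < k | reachb edge j k) ln (actlik ys j i).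

Lemma ancestors_split k j (u : nat -> R) : (j < k)%nat ->
  \sum_(m < k | reachb edge m j) u m = \sum_(m < j | reachb edge m j) u m + u j.
Proof.
move=> lt_jk; transitivity (\sum_(m < j.+1 | reachb edge m j) u m); last first.
  by rewrite big_mkcond big_ord_recr /= reachb_refl -big_mkcond.
rewrite (big_ord_widen_cond _ (fun m => reachb edge m j) u lt_jk).
apply: eq_bigl => m; case r_mj: reachb => //=.
by rewrite ltnS (reachb_le edge_forward r_mj).
Qed.

(* Proved by strong induction on k, the weights
   w_{k+1} cancelling the repeated counting of common ancestors. *)
Lemma recommendation_loglik ys k i i' :
  ln (pim ys k.+1 i) - ln (pi0 i) - ancestor_loglik ys k i =
  ln (pim ys k.+1 i') - ln (pi0 i') - ancestor_loglik ys k i'.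
Proof.
elim/ltn_ind: k i i' => k IH i i'.
pose excess (j : nat) x :=
  ln (pim ys j.+1 x) - ln (pi0 x) - ancestor_loglik ys j x - ln (pubnorm ys j).
have public_loglik (j : 'I_k) x : ln (pi ys j.+1 x) - ln (pi0 x) =
    \sum_(m < k | reachb edge m j) ln (actlik ys m x) + excess j x.
  rewrite piE lnD ?pubnorm_gt0 ?mulr_gt0 ?actlik_gt0 // lnM ?actlik_gt0 //.
  rewrite (ancestors_split (fun m => ln (actlik ys m x)) (ltn_ord j)).
  rewrite /excess /ancestor_loglik; lra.
have [cst pim_eq] := pim_log ys k.
have weighted_excess x : ln (pim ys k.+1 x) - ln (pi0 x) - ancestor_loglik ys k x =
    cst + \sum_(j < k) ratr (wvec edge k j ord0) * excess j x.
  rewrite pim_eq; under eq_bigr => j _ do rewrite public_loglik mulrDr.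
  rewrite big_split /= (@weighted_ancestor_sums _ edge_forward R k (fun m => ln (actlik ys m x))).
  by rewrite /ancestor_loglik; lra.
rewrite !weighted_excess; congr (_ + _); apply: eq_bigr => j _; congr (_ * _).
by rewrite /excess (IH j (ltn_ord j) i i').
Qed.

Lemma recommendation_ancestors k ys ys' :
  (forall j, (j < k)%nat -> reachb edge j k -> act ys j.+1 = act ys' j.+1) ->
  pim ys k.+1 = pim ys' k.+1.
Proof.
elim/ltn_ind: k ys ys' => k IH ys ys' same_acts.
have same_lik m : (m < k)%nat -> reachb edge m k -> actlik ys m = actlik ys' m.
  move=> lt_mk r_mk; rewrite /actlik (same_acts m lt_mk r_mk).
  suff -> : pim ys m.+1 = pim ys' m.+1 by [].
  apply: IH => // j lt_jm r_jm; apply: same_acts.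
    exact: ltn_trans lt_jm lt_mk.
  exact: reachb_trans r_jm r_mk.
have same_loglik x : ancestor_loglik ys k x = ancestor_loglik ys' k x.
  by apply: eq_bigr => j r_jk; rewrite (same_lik j (ltn_ord j) r_jk).
apply: functional_extensionality; apply: log_ratio_const_eq => // x x'.
have := recommendation_loglik ys k x x'; have := recommendation_loglik ys' k x x'.
by rewrite !same_loglik; lra.
Qed.

Lemma act_ancestors_fixed j ys ys' :
  (forall m, (m < j)%nat -> reachb edge m j -> act ys m.+1 = act ys' m.+1) ->
  act ys j.+1 = sel (etaOf B (pim ys' j.+1) (ys j.+1)).
Proof. by move=> same_acts; rewrite act_def (recommendation_ancestors same_acts). Qed.

Definition fair k ys0 (f : {ffun 'I_k.+1 -> 'I_Y}) : bool :=
  [forall j : 'I_k, inF edge j ==> (act (ext ys0 f) j.+1 == act ys0 j.+1)].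

Lemma fairP k ys0 f : reflect
  (forall j, (j < k)%nat -> reachb edge j k -> act (ext ys0 f) j.+1 = act ys0 j.+1)
  (@fair k ys0 f).
Proof.
apply: (iffP forallP) => [all_j j lt_jk r_jk | all_j j].
  by apply/eqP; have := all_j (Ordinal lt_jk); rewrite inFE //= r_jk.
by rewrite inFE //; apply/implyP => r_jk; apply/eqP/all_j.
Qed.

Definition fair_coord k ys0 (j : nat) (y : 'I_Y) : bool :=
  reachb edge j k ==> (sel (etaOf B (pim ys0 j.+1) y) == act ys0 j.+1).

(* The fair event is a product event: it constrains each observation
   separately, because on it every ancestor receives the recommendation it
   receives along ys0. *)
Lemma fair_product k ys0 (f : {ffun 'I_k.+1 -> 'I_Y}) :
  fair ys0 f = [forall j : 'I_k, fair_coord k ys0 j (f (widen_ord (leqnSn k) j))].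
Proof.
apply/fairP/forallP => [same_acts j | coords].
  apply/implyP => r_jk; rewrite -(extE ys0 f) -act_ancestors_fixed.
    by rewrite same_acts.
  move=> m lt_mj r_mj; apply: same_acts; first exact: ltn_trans lt_mj (ltn_ord j).
  exact: reachb_trans r_mj r_jk.
elim/ltn_ind=> j IH lt_jk r_jk; rewrite (act_ancestors_fixed (ys' := ys0)).
  have := coords (Ordinal lt_jk); rewrite /fair_coord r_jk -(extE ys0 f) /=.
  by move/eqP.
move=> m lt_mj r_mj; apply: IH => //; first exact: ltn_trans lt_mj lt_jk.
exact: reachb_trans r_mj r_jk.
Qed.

(* Unnormalized posterior of the state given the fair event: the prior times
   the likelihoods of the ancestors' actions. *)
Definition fair_weight k ys0 i := pi0 i * \prod_(j < k | reachb edge j k) actlik ys0 j i.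

Lemma fair_weight_gt0 k ys0 i : 0 < fair_weight k ys0 i.
Proof. by rewrite mulr_gt0 ?prodr_gt0 // => j _; apply: actlik_gt0. Qed.

Lemma fair_event_mass k ys0 (g : pred 'I_Y) i :
  \sum_(f | @fair k ys0 f && g (f ord_max)) jointP pi0 B i f
  = fair_weight k ys0 i * \sum_(y | g y) B i y.
Proof.
pose Q (j : 'I_k.+1) y := if (j < k)%nat then fair_coord k ys0 j y else g y.
have coord_eq (j : 'I_k) :
    \sum_(y | Q (widen_ord (leqnSn k) j) y) B i y =
    if reachb edge j k then actlik ys0 j i else 1.
  rewrite /Q /fair_coord /= ltn_ord; case: reachb => /=; last exact: B_sum1.
  by rewrite /actlik PactE.
rewrite (eq_bigl (fun f : {ffun 'I_k.+1 -> 'I_Y} => [forall j, Q j (f j)])).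
  rewrite /jointP -mulr_sumr (sum_prod_event Q (fun _ y => B i y)).
  rewrite big_ord_recr /= mulrA; congr (_ * _ * _).
    by rewrite [RHS]big_mkcond; apply: eq_bigr => j _; rewrite coord_eq.
  by apply: eq_bigl => y; rewrite /Q /= ltnn.
move=> f; rewrite fair_product; apply/andP/forallP => [[/forallP coords g_last] j | coords].
  rewrite /Q; case: ifP => [lt_jk | /negbT]; last first.
    rewrite -leqNgt => le_kj; rewrite (_ : j = ord_max) //.
    by apply: val_inj; apply/eqP; rewrite /= eqn_leq le_kj andbT -ltnS.
  by have := coords (Ordinal lt_jk); rewrite (_ : widen_ord _ _ = j) //; apply: val_inj.
split; last by have := coords ord_max; rewrite /Q /= ltnn.
by apply/forallP => j; have := coords (widen_ord (leqnSn k) j); rewrite /Q /= ltn_ord.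
Qed.

Lemma recommendation_fair_weight k ys0 i :
  pim ys0 k.+1 i = fair_weight k ys0 i / \sum_x fair_weight k ys0 x.
Proof.
have norm_gt0 : 0 < \sum_x fair_weight k ys0 x.
  exact: (sumr_gt0_pos i) (fair_weight_gt0 k ys0).
pose q x := fair_weight k ys0 x / \sum_x fair_weight k ys0 x.
apply: (@log_ratio_const_eq _ _ q) => // [x | | x x'].
- by rewrite divr_gt0 ?fair_weight_gt0.
- by rewrite -mulr_suml divff // gt_eqF.
have prod_gt0 z : 0 < \prod_(j < k | reachb edge j k) actlik ys0 j z.
  by apply: prodr_gt0 => j _; apply: actlik_gt0.
rewrite !lnD ?fair_weight_gt0 // !lnM ?pi0_gt0 ?prod_gt0 //.
rewrite !ln_prod => [| j _ | j _]; try exact: actlik_gt0.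
by have := recommendation_loglik ys0 k x x'; rewrite /ancestor_loglik; lra.
Qed.

Lemma act_on_fair k ys0 (f : {ffun 'I_k.+1 -> 'I_Y}) : fair ys0 f ->
  act (ext ys0 f) k.+1 = sel (etaOf B (pim ys0 k.+1) (f ord_max)).
Proof.
by move/fairP=> same_acts; rewrite -(extE ys0 f ord_max) (act_ancestors_fixed same_acts).
Qed.

Lemma fair_ratings k ys0 i :
  pim ys0 k.+1 i = condP pi0 B (@fair k ys0) i /\
  etaOf B (pim ys0 k.+1) (ys0 k.+1) i =
    condP pi0 B (fun f => @fair k ys0 f && (f ord_max == ys0 k.+1)) i /\
  pi ys0 k.+1 i =
    condP pi0 B (fun f => @fair k ys0 f && (act (ext ys0 f) k.+1 == act ys0 k.+1)) i.
Proof.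
pose w := fair_weight k ys0.
have norm_neq0 : \sum_x w x != 0.
  by apply: lt0r_neq0; apply: (sumr_gt0_pos i); apply: fair_weight_gt0.
have pim_eq : pim ys0 k.+1 = fun x => w x / \sum_x w x.
  by apply: functional_extensionality; apply: recommendation_fair_weight.
split; [|split].
- rewrite (@condP_normalize _ _ _ _ _ _ w) ?recommendation_fair_weight // => j.
  by rewrite -[RHS]mulr1 -(B_sum1 j) -fair_event_mass; apply: eq_bigl => f; rewrite andbT.
- rewrite (@condP_normalize _ _ _ _ _ _ (fun j => w j * B j (ys0 k.+1))); last first.
    by move=> j; rewrite (fair_event_mass k ys0 (pred1 (ys0 k.+1))) big_pred1_eq.
  by rewrite /etaOf RdivE /sumX pim_eq bayes_rescale.
- rewrite (@condP_normalize _ _ _ _ _ _ (fun j => w j * actlik ys0 k j)); last first.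
    move=> j; rewrite /actlik PactE -fair_event_mass; apply: eq_bigl => f.
    by apply: andb_id2l => /act_on_fair->.
  by rewrite piE /pubnorm pim_eq bayes_rescale.
Qed.

End Reputation.

Lemma IZR_intZ (z : int) : IZR (intZ z) = z%:~R.
Proof.
case: z => n; rewrite /intZ; first by rewrite -INR_IZR_INZ INRE.
by rewrite opp_IZR -INR_IZR_INZ INRE NegzE mulrNz.
Qed.

Lemma ratRE (q : rat) : ratR q = ratr q.
Proof. by rewrite /ratR !IZR_intZ RdivE. Qed.

Unset Implicit Arguments.
Close Scope ring_scope.
Open Scope R_scope.

Theorem theorem2
  (X Y A : nat)
  (pi0 : 'I_X -> R) (B : 'I_X -> 'I_Y -> R) (c : 'I_A -> 'I_X -> R)
  (edge : nat -> nat -> bool)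
  (sel : ('I_X -> R) -> 'I_A)
  (pim pi : (nat -> 'I_Y) -> nat -> 'I_X -> R)
  (act : (nat -> 'I_Y) -> nat -> 'I_A)
  (* prior *)
  (Hpi0pos : forall i, (0 < pi0 i))
  (Hpi0sum : sumX pi0 = 1)
  (* observation likelihoods *)
  (HBpos : forall i y, (0 < B i y))
  (HBsum : forall i, \big[Rplus/0]_(y < Y) B i y = 1)
  (* DAG: every edge (m,n) has 1 <= m < n *)
  (Hedge : forall m n, edge m n -> (leq 1 m && leq m.+1 n))
  (* a(pi,y) = argmin_a c_a' eta with a fixed deterministic tie-breaking *)
  (Hsel : forall eta a,
      (sumX (fun i => c (sel eta) i * eta i) <= sumX (fun i => c a i * eta i)))
  (* recommendation belief of node n = k+1 (log-linear combination) *)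
  (Hpim : forall ys k,
      (forall i, (0 < pim ys k.+1 i)) /\ sumX (pim ys k.+1) = 1 /\
      exists cst : R, forall i,
        ln (pim ys k.+1 i) =
        (ln (pi0 i)
         + \big[Rplus/0]_(j < k)
             (ratR (wvec edge k j ord0) * (ln (pi ys j.+1 i) - ln (pi0 i)))
         + cst))
  (* action of node n *)
  (Hact : forall ys k, act ys k.+1 = sel (etaOf B (pim ys k.+1) (ys k.+1)))
  (* public belief of node n *)
  (Hpi : forall ys k,
      pi ys k.+1 = pubUpdate B sel (pim ys k.+1) (act ys k.+1)) :
  forall (ys0 : nat -> 'I_Y) (k : nat) (i : 'I_X),
    let fair := fun f : {ffun 'I_k.+1 -> 'I_Y} =>
      [forall j : 'I_k, inF edge j ==> (act (ext ys0 f) j.+1 == act ys0 j.+1)] in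
    pim ys0 k.+1 i = condP pi0 B fair i /\
    etaOf B (pim ys0 k.+1) (ys0 k.+1) i =
      condP pi0 B (fun f => fair f && (f ord_max == ys0 k.+1)) i /\
    pi ys0 k.+1 i =
      condP pi0 B (fun f => fair f && (act (ext ys0 f) k.+1 == act ys0 k.+1)) i.
Proof.
move=> ys0 k i; apply: fair_ratings => //.
- by move=> x; apply/RltP.
- by move=> x y; apply/RltP.
- by move=> ys k' x; apply/RltP; case: (Hpim ys k').
- by move=> ys k'; case: (Hpim ys k') => _ [].
- move=> ys k'; case: (Hpim ys k') => _ [_ [cst pim_log]]; exists cst => x.
  by rewrite pim_log; under eq_bigr => j _ do rewrite ratRE.
Qed.
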